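(* Let $A, B, C \in \mathbb{Z}$ with $A > 0$ such that $Ax^2 + Bx + C$ is irreducible, let $\beta$ be a real root of it and $\beta'$ its other root. Then the following are equivalent: (i) $p_\beta(\alpha) < \infty$ for every $\alpha \in \mathbb{R}$; (ii) either $2A + B \leq 0$, or ($2A + B > 0$ and $A + B + C < 0$); (iii) at least one of $\beta$ and $\beta'$ is greater than $1$.
   Context: For $\beta, \alpha \in \mathbb{C}$, $p_\beta(\alpha) \in \mathbb{Z}_{\geq 0}\cup\{\infty\}$ is the number of polynomials $f \in \mathbb{Z}_{\geq 0}[x]$ (non-negative integer coefficients) with $f(\beta) = \alpha$. *)

From HB Require Import structures.
From mathcomp Require Import all_boot all_order all_algebra.
From mathcomp Require Import boolp classical_sets cardinality reals.
Set Implicit Arguments. Unset Strict Implicit. Unset Printing Implicit Defensive.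
Import Order.TTheory GRing.Theory Num.Theory.
Local Open Scope ring_scope.
Local Open Scope classical_set_scope.

Definition quadZ (A B C : int) : {poly int} := A%:P * 'X^2 + B%:P * 'X + C%:P.

Definition evalN (R : realType) (f : {poly nat}) (beta : R) : R :=
  (map_poly (fun n : nat => n%:R : R) f).[beta].

(* p_beta(alpha) < oo : the set of f in Z_{>=0}[x] with f(beta) = alpha is finite. *)
Definition p_finite (R : realType) (beta alpha : R) : Prop :=
  finite_set [set f : {poly nat} | evalN f beta = alpha].

From HB Require Import structures.
From mathcomp Require Import all_boot all_order all_algebra.
From mathcomp Require Import boolp classical_sets cardinality reals.
From mathcomp Require Import ring lra.
Import Order.TTheory GRing.Theory Num.Theory.

Set Implicit Arguments.
Unset Strict Implicit.
Unset Printing Implicit Defensive.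

Local Open Scope ring_scope.
Local Open Scope classical_set_scope.

(* Since the minimal polynomial of beta is the quadratic, f(beta) = g(beta) forces
   f(beta') = g(beta') for f, g with nonnegative integer coefficients.  When
   theta > 1, a fibre {f | f(theta) = alpha} is finite: the coefficients are at
   most |alpha| and the degree at most log_theta |alpha|.  So one conjugate above 1
   makes every fibre at beta finite.
   Conversely, suppose beta, beta' < 1 (irreducibility excludes the value 1).  It
   suffices to find r <> 0 and g with r(beta) + beta^k g(beta) = g(beta): then the
   iterates of f |-> r + x^k f starting from g all take the value g(beta) at beta.
   If A + B >= 0, take k = 1, g = (A + B) + A x and r = A + B + C > 0.  Otherwise
   beta, beta' lie in (0, 1).  Reduce A^m x^(m+1) = P x + Q modulo the quadratic,
   with P, Q integers.  Comparing the two conjugates gives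
   |P| |beta - beta'| = A^m |beta^(m+1) - beta'^(m+1)| < A^m |beta - beta'| for
   large m, so |P| < A^m, and Q (beta' - beta) = A^m beta beta' (beta^m - beta'^m),
   whose sign is opposite to that of beta' - beta, so Q <= 0.  Hence k = m,
   g = A^m x and r = (A^m - P) x - Q work.
   Finally (ii) <-> (iii) is Vieta: 2A + B = A (2 - beta - beta') and
   A + B + C = A (1 - beta) (1 - beta'). *)

Lemma bernoulli_ineq (R : realDomainType) (x : R) (n : nat) :
  1 <= x -> 1 + n%:R * (x - 1) <= x ^+ n.
Proof.
move=> x_ge1; elim: n => [|n IH]; first by rewrite mul0r addr0 expr0.
have : 0 <= x * (x ^+ n - (1 + n%:R * (x - 1))).
  by rewrite mulr_ge0 ?subr_ge0 // (le_trans ler01).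
have : 0 <= n%:R * (x - 1) * (x - 1) by rewrite !mulr_ge0 ?subr_ge0.
rewrite exprS -natr1; lra.
Qed.

Lemma exprn_unbounded (R : archiRealFieldType) (x a : R) :
  1 < x -> exists n : nat, a < x ^+ n.
Proof.
move=> x_gt1; have x1_gt0 : 0 < x - 1 by rewrite subr_gt0.
have := @archi_boundP _ (`|a| / (x - 1)) (divr_ge0 (normr_ge0 a) (ltW x1_gt0)).
rewrite ltr_pdivrMr // => a_lt; exists (Num.Def.archi_bound (`|a| / (x - 1))).
apply: lt_le_trans (bernoulli_ineq _ (ltW x_gt1)).
by have := ler_norm a; lra.
Qed.

Lemma exprn_small (R : archiRealFieldType) (x e : R) : 0 <= x -> x < 1 -> 0 < e ->
  exists N : nat, forall n, (N <= n)%N -> x ^+ n < e.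
Proof.
move=> x_ge0 x_lt1 e_gt0; have [->|x_neq0] := eqVneq x 0.
  by exists 1%N => -[|n]; rewrite // expr0n.
have x_gt0 : 0 < x by rewrite lt_def x_neq0.
have [N eN] : exists N, e^-1 < x^-1 ^+ N by apply: exprn_unbounded; rewrite invf_gt1.
exists N => n le_Nn; apply: le_lt_trans (ler_wiXn2l x_ge0 (ltW x_lt1) le_Nn) _.
by move: eN; rewrite exprVn ltf_pV2 // posrE exprn_gt0.
Qed.

Lemma subrXX_mul_ge0 (R : realDomainType) (n : nat) (x y : R) : 0 <= x -> 0 <= y ->
  0 <= (x ^+ n - y ^+ n) * (x - y).
Proof.
move=> x_ge0 y_ge0; have [xy|yx] := leP x y.
  by apply: mulr_le0; rewrite subr_le0 //; apply: lerXn2r; rewrite ?nnegrE.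
apply: mulr_ge0; rewrite subr_ge0; last exact: ltW.
by apply: lerXn2r; rewrite ?nnegrE // ltW.
Qed.

Lemma quad_vieta (F : idomainType) (a b c x y : F) :
  a * x ^+ 2 + b * x + c = 0 -> a * y ^+ 2 + b * y + c = 0 -> x != y ->
  a * (x + y) = - b /\ a * (x * y) = c.
Proof.
move=> qx qy x_neq_y.
have : (x - y) * (a * (x + y) + b) = (a * x ^+ 2 + b * x + c) - (a * y ^+ 2 + b * y + c).
  by ring.
rewrite qx qy subrr => /eqP; rewrite mulf_eq0 subr_eq0 (negPf x_neq_y) /= => /eqP sum.
split; first by apply/eqP; rewrite -addr_eq0 sum.
have : a * (x * y) - c = x * (a * (x + y) + b) - (a * x ^+ 2 + b * x + c) by ring.
by rewrite sum qx mulr0 subrr => /eqP; rewrite subr_eq0 => /eqP.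
Qed.

Lemma quad_roots_gt1P (R : realFieldType) (a b c x y : R) : 0 < a ->
    a * (x + y) = - b -> a * (x * y) = c -> x != 1 -> y != 1 ->
  (2 * a + b <= 0 \/ 0 < 2 * a + b /\ a + b + c < 0) <-> (1 < x \/ 1 < y).
Proof.
move=> a_gt0 sum prod x_neq1 y_neq1.
have -> : b = - (a * (x + y)) by rewrite sum opprK.
rewrite -prod; split=> [cond|x_or_y_gt1].
  case: (ltrP 1 x) => [|x_le1]; first by left.
  case: (ltrP 1 y) => [|y_le1]; first by right.
  have x_lt1 : x < 1 by rewrite lt_neqAle x_neq1.
  have y_lt1 : y < 1 by rewrite lt_neqAle y_neq1.
  have : 0 < a * ((1 - x) * (1 - y)) by rewrite !mulr_gt0 // subr_gt0.
  by case: cond => [|[_]]; nra.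
case: (lerP (2 * a + - (a * (x + y))) 0) => [|sum_lt2]; first by left.
right; split=> //; have : 0 < a * (2 - (x + y)) by lra.
rewrite pmulr_rgt0 // subr_gt0 => xy_lt2.
case: x_or_y_gt1 => [x_gt1|y_gt1].
  have : 0 < a * ((x - 1) * (1 - y)) by rewrite !mulr_gt0 // subr_gt0 //; lra.
  nra.
have : 0 < a * ((y - 1) * (1 - x)) by rewrite !mulr_gt0 // subr_gt0 //; lra.
nra.
Qed.

Lemma irredp_dvdp_common_root (F K : fieldType) (phi : {rmorphism F -> K})
    (p q : {poly F}) (x : K) :
  irreducible_poly p -> root (map_poly phi p) x -> root (map_poly phi q) x -> p %| q.
Proof.
move=> p_irr px qx; have [gcd_eq1|gcd_eqp] := irredp_XsubCP p_irr (dvdp_gcdl p q).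
  have : coprimep (map_poly phi p) (map_poly phi q) by rewrite coprimep_map -gcdp_eqp1.
  by move=> /coprimep_root/(_ px); rewrite -rootE qx.
by rewrite -(eqp_dvdl q gcd_eqp) dvdp_gcdr.
Qed.

Lemma root_conj (F K : fieldType) (phi : {rmorphism F -> K}) (p q : {poly F}) (x y : K) :
  irreducible_poly p -> root (map_poly phi p) x -> root (map_poly phi p) y ->
  root (map_poly phi q) x -> root (map_poly phi q) y.
Proof.
move=> p_irr px py /(irredp_dvdp_common_root p_irr px) /dvdpP[s ->].
by rewrite rmorphM rootM py orbT.
Qed.

Section EvalN.
Variable R : realType.
Implicit Types (f g r : {poly nat}) (x : R).

Lemma evalND f g x : evalN (f + g) x = evalN f x + evalN g x.
Proof. by rewrite /evalN rmorphD hornerD. Qed.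

Lemma evalNM f g x : evalN (f * g) x = evalN f x * evalN g x.
Proof. by rewrite /evalN rmorphM hornerM. Qed.

Lemma evalNX x : evalN 'X x = x.
Proof. by rewrite /evalN map_polyX hornerX. Qed.

Lemma evalNXn k x : evalN 'X^k x = x ^+ k.
Proof. by rewrite /evalN map_polyXn hornerXn. Qed.

Lemma evalNC (c : nat) x : evalN c%:P x = c%:R.
Proof. by rewrite /evalN map_polyC hornerC. Qed.

Lemma evalN_abszC (z : int) x : 0 <= z -> evalN (absz z)%:P x = z%:~R.
Proof. by move=> z_ge0; rewrite evalNC natr_absz ger0_norm. Qed.

Lemma evalN_sum f x : evalN f x = \sum_(i < size f) (nth 0 f i)%:R * x ^+ i.
Proof.
rewrite /evalN (@horner_coef_wide _ (size f)); last exact: size_poly.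
by apply: eq_bigr => i _; rewrite coef_map.
Qed.

Lemma evalN_ge0 f x : 0 <= x -> 0 <= evalN f x.
Proof.
by move=> x_ge0; rewrite evalN_sum sumr_ge0 // => i _; rewrite mulr_ge0 ?exprn_ge0.
Qed.

Lemma coef_evalN_le f x i : 0 <= x -> (nth 0 f i)%:R * x ^+ i <= evalN f x.
Proof.
move=> x_ge0; have [i_lt|i_ge] := ltnP i (size f); last first.
  by rewrite nth_default // mul0r evalN_ge0.
rewrite evalN_sum (bigD1 (Ordinal i_lt)) //= lerDl sumr_ge0 // => j _.
by rewrite mulr_ge0 ?exprn_ge0.
Qed.

Lemma lead_coef_evalN_le f x : 0 <= x -> f != 0 -> x ^+ (size f).-1 <= evalN f x.
Proof.
move=> x_ge0 f_neq0; apply: le_trans (coef_evalN_le f (size f).-1 x_ge0).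
apply: ler_peMl; first exact: exprn_ge0.
by rewrite ler1n lt0n -lead_coefE lead_coef_eq0.
Qed.

Lemma evalN_gt0 f x : 0 < x -> f != 0 -> 0 < evalN f x.
Proof.
move=> x_gt0 f_neq0; apply: lt_le_trans (lead_coef_evalN_le (ltW x_gt0) f_neq0).
exact: exprn_gt0.
Qed.

Lemma not_p_finite_pump x r g (k : nat) : r != 0 ->
  evalN r x + x ^+ k * evalN g x = evalN g x -> ~ p_finite x (evalN g x).
Proof.
move=> r_neq0 g_fixed; pose s n := iter n (fun f => r + 'X^k * f) g.
have sS n : s n.+1 = r + 'X^k * s n by [].
have s_val n : evalN (s n) x = evalN g x.
  by elim: n => // n IH; rewrite sS evalND evalNM evalNXn IH.
have s_at1 n : evalN (s n) (1 : R) = n%:R * evalN r 1 + evalN g 1.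
  elim: n => [|n IH]; first by rewrite mul0r add0r.
  by rewrite sS evalND evalNM evalNXn expr1n mul1r IH mulrSr; ring.
have s_inj : injective s.
  move=> m n /(congr1 (fun f => evalN f (1 : R))); rewrite !s_at1 => /addIr /mulIf.
  by rewrite gt_eqF ?evalN_gt0 // => /(_ isT) /eqP; rewrite eqr_nat => /eqP.
move=> fin; apply: infinite_nat.
rewrite (_ : setT = s @^-1` [set f | evalN f x = evalN g x]).
  by apply: finite_preimage fin => m n _ _ /s_inj.
by apply/seteqP; split=> n //= _; exact: s_val.
Qed.

End EvalN.

Lemma finite_bounded_polys (N M : nat) :
  finite_set [set f : {poly nat} | (size f <= N)%N /\ forall i, (nth 0 f i <= M)%N].
Proof.
pose F (h : {ffun 'I_N.+1 -> 'I_M.+1}) : {poly nat} := \poly_(i < N) (h (inord i) : nat).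
apply: sub_finite_set (finite_image F (@finite_finset _ setT)) => f [f_size f_coef].
exists [ffun i : 'I_N.+1 => inord (nth 0 f i) : 'I_M.+1] => //.
apply/polyP => i; rewrite coef_poly.
case: ltnP => [i_lt|i_ge]; last by rewrite nth_default // (leq_trans f_size).
by rewrite ffunE !inordK // ltnS ?f_coef // ltnW.
Qed.

Lemma p_finite_gt1 (R : realType) (x a : R) : 1 < x -> p_finite x a.
Proof.
move=> x_gt1; have x_ge0 : 0 <= x by rewrite ltW // (lt_trans ltr01).
have [N a_lt] := exprn_unbounded `|a| x_gt1.
have M_gt := archi_boundP (normr_ge0 a).
apply: sub_finite_set (finite_bounded_polys N (Num.Def.archi_bound `|a|)) => f /= fa.
split=> [|i]; last first.
  apply/ltnW; rewrite -(ltr_nat R); apply: le_lt_trans M_gt.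
  apply: le_trans (ler_peMr _ _) (le_trans (coef_evalN_le f i x_ge0) _) => //.
  - by rewrite exprn_ege1 // ltW.
  - by rewrite fa ler_norm.
have [->|f_neq0] := eqVneq f 0; first by rewrite size_poly0.
have : x ^+ (size f).-1 < x ^+ N.
  apply: le_lt_trans (lead_coef_evalN_le x_ge0 f_neq0) _.
  by rewrite fa (le_lt_trans (ler_norm a)).
by rewrite ltr_eXn2l //; case: (size f).
Qed.

Lemma evalN_ratr (R : realType) (f : {poly nat}) (x : R) :
  evalN f x = (map_poly ratr (map_poly (fun n : nat => n%:R : rat) f)).[x].
Proof.
rewrite /evalN -map_poly_comp; congr (_.[x]).
by apply: eq_map_poly => n /=; rewrite ratr_nat.
Qed.

Fixpoint quad_pow_rem (A B C : int) (m : nat) : int * int :=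
  if m is m'.+1 then
    (A * (quad_pow_rem A B C m').2 - B * (quad_pow_rem A B C m').1,
     - (C * (quad_pow_rem A B C m').1))
  else (1, 0).

Lemma quad_pow_remE (R : comNzRingType) (A B C : int) (x : R) (m : nat) :
    A%:~R * x ^+ 2 + B%:~R * x + C%:~R = 0 ->
  (A ^+ m)%:~R * x ^+ m.+1 =
    (quad_pow_rem A B C m).1%:~R * x + (quad_pow_rem A B C m).2%:~R.
Proof.
move=> qx; elim: m => [|m IH]; first by rewrite expr0 expr1 !mul1r addr0.
have qC : C%:~R = - (A%:~R * x ^+ 2 + B%:~R * x) by apply/eqP; rewrite -addr_eq0 addrC qx.
rewrite /=; move: IH; case: (quad_pow_rem A B C m) => P Q /= IH.
rewrite exprS rmorphM (exprS x) mulrACA IH !rmorphB !rmorphN !rmorphM /= qC; ring.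
Qed.

Section QuadZ.
Variables (R : realType) (A B C : int).
Let qR := map_poly (intr : int -> R) (quadZ A B C).

Lemma quadZ_root (x : R) : root qR x -> A%:~R * x ^+ 2 + B%:~R * x + C%:~R = 0.
Proof.
rewrite /root /qR /quadZ !rmorphD !rmorphM /= !map_polyC ?rmorphXn ?map_polyX /=.
by rewrite !hornerE => /eqP.
Qed.

Lemma quadZ_roots_gt1P (x y : R) : 0 < A -> root qR x -> root qR y -> x != y ->
    x != 1 -> y != 1 ->
  (2 * A + B <= 0 \/ 0 < 2 * A + B /\ A + B + C < 0) <-> (1 < x \/ 1 < y).
Proof.
move=> A_gt0 /quadZ_root qx /quadZ_root qy x_neq_y x_neq1 y_neq1.
have [sum prod] := quad_vieta qx qy x_neq_y.
rewrite -(lerz0 R) -(ltr0z R) -(ltrz0 R) !rmorphD rmorphM /=.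
by apply: quad_roots_gt1P; rewrite ?ltr0z.
Qed.

Lemma not_p_finite_coef_sums_pos (x : R) : root qR x ->
  0 <= A -> 0 <= A + B -> 0 < A + B + C -> exists a, ~ p_finite x a.
Proof.
move=> /quadZ_root qx A_ge0 AB_ge0 ABC_gt0.
pose g := (absz (A + B))%:P + (absz A)%:P * 'X.
exists (evalN g x); apply: (@not_p_finite_pump _ x (absz (A + B + C))%:P g 1).
  by rewrite polyC_eq0 absz_eq0 gt_eqF.
rewrite /g !evalND evalNM evalNX !evalN_abszC ?(ltW ABC_gt0) // expr1 !rmorphD /=.
lra.
Qed.

Lemma quad_pow_rem_bounds (x y : R) (m : nat) : 0 < A -> root qR x -> root qR y ->
    x != y -> 0 < x -> 0 < y -> x ^+ m.+1 < `|x - y| -> y ^+ m.+1 < `|x - y| ->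
  `|(quad_pow_rem A B C m).1| < A ^+ m /\ (quad_pow_rem A B C m).2 <= 0.
Proof.
move=> A_gt0 /quadZ_root qx /quadZ_root qy x_neq_y x_gt0 y_gt0 xm_lt ym_lt.
pose c := A ^+ m; pose P := (quad_pow_rem A B C m).1; pose Q := (quad_pow_rem A B C m).2.
have ex : c%:~R * x ^+ m.+1 = P%:~R * x + Q%:~R := quad_pow_remE m qx.
have ey : c%:~R * y ^+ m.+1 = P%:~R * y + Q%:~R := quad_pow_remE m qy.
have c_gt0 : (0 : R) < c%:~R by rewrite ltr0z exprn_gt0.
split.
  have eP : P%:~R * (x - y) = c%:~R * (x ^+ m.+1 - y ^+ m.+1).
    by rewrite [RHS]mulrBr ex ey; ring.
  have : `|x ^+ m.+1 - y ^+ m.+1| < `|x - y|.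
    by rewrite ltr_norml; have := exprn_gt0 m.+1 x_gt0; have := exprn_gt0 m.+1 y_gt0; lra.
  rewrite -(ltr_pM2l c_gt0) -[c%:~R]gtr0_norm // -normrM -eP normrM -intr_norm.
  by rewrite ltr_pM2r ?normr_gt0 ?subr_eq0 // gtr0_norm // ltr_int.
have eQ : Q%:~R * (y - x) = c%:~R * (x * y) * (x ^+ m - y ^+ m).
  rewrite (_ : _ * _ * _ = y * (c%:~R * x ^+ m.+1) - x * (c%:~R * y ^+ m.+1)).
    by rewrite ex ey; ring.
  by rewrite !exprS; ring.
have : Q%:~R * (x - y) ^+ 2 <= 0 :> R.
  rewrite (_ : _ * _ = - (Q%:~R * (y - x) * (x - y))); last by ring.
  rewrite eQ -mulrA oppr_le0; apply: mulr_ge0; last exact: subrXX_mul_ge0 (ltW _) (ltW _).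
  by rewrite mulr_ge0 ?mulr_ge0 // ltW.
by rewrite pmulr_lle0 ?lerz0 // exprn_even_gt0 //= subr_eq0.
Qed.

Lemma not_p_finite_roots01 (x y : R) : 0 < A -> root qR x -> root qR y -> x != y ->
  0 < x -> x < 1 -> 0 < y -> y < 1 -> exists a, ~ p_finite x a.
Proof.
move=> A_gt0 qx qy x_neq_y x_gt0 x_lt1 y_gt0 y_lt1.
have d_gt0 : 0 < `|x - y| by rewrite normr_gt0 subr_eq0.
have [Nx x_small] := exprn_small (ltW x_gt0) x_lt1 d_gt0.
have [Ny y_small] := exprn_small (ltW y_gt0) y_lt1 d_gt0.
pose m := maxn Nx Ny.
have [P_lt Q_le0] : `|(quad_pow_rem A B C m).1| < A ^+ m /\ (quad_pow_rem A B C m).2 <= 0.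
  apply: (quad_pow_rem_bounds A_gt0 qx qy x_neq_y x_gt0 y_gt0).
  - by apply: x_small; rewrite leqW // leq_maxl.
  - by apply: y_small; rewrite leqW // leq_maxr.
pose c := A ^+ m; pose P := (quad_pow_rem A B C m).1; pose Q := (quad_pow_rem A B C m).2.
have ex : c%:~R * x ^+ m.+1 = P%:~R * x + Q%:~R := quad_pow_remE m (quadZ_root qx).
have cP_gt0 : 0 < c - P by rewrite subr_gt0 (le_lt_trans (ler_norm P)).
pose r := (absz (c - P))%:P * 'X + (absz (- Q))%:P.
pose g := (absz c)%:P * 'X.
have r_val : evalN r x = (c - P)%:~R * x + (- Q)%:~R.
  by rewrite evalND evalNM evalNX !evalN_abszC ?(ltW cP_gt0) ?oppr_ge0.
have g_val : evalN g x = c%:~R * x.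
  by rewrite evalNM evalNX evalN_abszC // exprn_ge0 // ltW.
exists (evalN g x); apply: (@not_p_finite_pump _ x r g m).
  apply/eqP => r0; have : 0 < evalN r x.
    by rewrite r_val ltr_pwDl ?mulr_gt0 ?ltr0z // ler0z oppr_ge0.
  by rewrite r0 /evalN map_poly0 horner0 ltxx.
rewrite r_val g_val rmorphB rmorphN /=.
rewrite (_ : x ^+ m * _ = c%:~R * x ^+ m.+1); last by rewrite exprSr; ring.
by rewrite ex; ring.
Qed.

Lemma not_p_finite_roots_lt1 (x y : R) : 0 < A -> root qR x -> root qR y -> x != y ->
  x < 1 -> y < 1 -> exists a, ~ p_finite x a.
Proof.
move=> A_gt0 qx qy x_neq_y x_lt1 y_lt1.
have [sum prod] := quad_vieta (quadZ_root qx) (quadZ_root qy) x_neq_y.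
have A_gt0' : (0 : R) < A%:~R by rewrite ltr0z.
have [AB_ge0|AB_lt0] := lerP 0 (A + B).
  apply: not_p_finite_coef_sums_pos qx (ltW A_gt0) AB_ge0 _.
  have : 0 < A%:~R * ((1 - x) * (1 - y)) :> R by rewrite !mulr_gt0 // subr_gt0.
  by rewrite -(ltr0z R) !rmorphD /=; lra.
have xy_gt1 : 1 < x + y.
  have : A%:~R * (1 - (x + y)) < 0 :> R.
    by move: AB_lt0; rewrite -(ltrz0 R) rmorphD /=; lra.
  by rewrite pmulr_rlt0 // subr_lt0.
by apply: (not_p_finite_roots01 A_gt0 qx qy x_neq_y); lra.
Qed.

Let qQ := map_poly (intr : int -> rat) (quadZ A B C).
Hypothesis qQ_irr : irreducible_poly qQ.

Lemma qR_ratr : qR = map_poly ratr qQ.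
Proof. by rewrite /qR /qQ -map_poly_comp; apply: eq_map_poly => z /=; rewrite ratr_int. Qed.

Lemma evalN_conj (x y : R) (f g : {poly nat}) : root qR x -> root qR y ->
  evalN f x = evalN g x -> evalN f y = evalN g y.
Proof.
rewrite qR_ratr => qx qy fg_x; apply/eqP; rewrite -subr_eq0.
pose natQ := map_poly (fun n : nat => n%:R : rat).
have hE z : (map_poly ratr (natQ f - natQ g)).[z] = evalN f z - evalN g z.
  by rewrite rmorphB hornerD hornerN !evalN_ratr.
by rewrite -hE; apply: root_conj qQ_irr qx qy _; rewrite /root hE fg_x subrr.
Qed.

Lemma root_neq1 (x y : R) : root qR x -> root qR y -> x != y -> x != 1.
Proof.
rewrite qR_ratr => qx qy; apply: contra_neq => x_eq1.
have : root (map_poly ratr ('X - 1%:P)) y.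
  by apply: root_conj qQ_irr qx qy _; rewrite map_polyXsubC rmorph1 root_XsubC x_eq1.
by rewrite map_polyXsubC rmorph1 root_XsubC x_eq1 eq_sym => /eqP.
Qed.

Lemma p_finite_conj_gt1 (x y : R) : root qR x -> root qR y -> 1 < y ->
  forall a, p_finite x a.
Proof.
move=> qx qy y_gt1 a; have [[g ga]|no_g] := pselect (exists g, evalN g x = a).
  apply: sub_finite_set (p_finite_gt1 (evalN g y) y_gt1) => f /= fa.
  by apply: evalN_conj qx qy _; rewrite fa ga.
rewrite /p_finite (_ : [set f | _] = set0) //.
by apply/seteqP; split=> f //= fa; apply: no_g; exists f.
Qed.

End QuadZ.

Theorem theorem7 (R : realType) (A B C : int) (beta beta' : R) :
  0 < A ->
  irreducible_poly (map_poly (intr : int -> rat) (quadZ A B C)) ->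
  root (map_poly (intr : int -> R) (quadZ A B C)) beta ->
  root (map_poly (intr : int -> R) (quadZ A B C)) beta' ->
  beta' != beta ->
  ((forall alpha : R, p_finite beta alpha) <->
     (2 * A + B <= 0 \/ (0 < 2 * A + B /\ A + B + C < 0))) /\
  ((2 * A + B <= 0 \/ (0 < 2 * A + B /\ A + B + C < 0)) <->
     (1 < beta \/ 1 < beta')).
Proof.
move=> A_gt0 q_irr qb qb' b'_neq_b; have b_neq_b' : beta != beta' by rewrite eq_sym.
have b_neq1 := root_neq1 q_irr qb qb' b_neq_b'.
have b'_neq1 := root_neq1 q_irr qb' qb b'_neq_b.
have cond_iff := quadZ_roots_gt1P A_gt0 qb qb' b_neq_b' b_neq1 b'_neq1.
suff fin_iff : (forall alpha, p_finite beta alpha) <-> (1 < beta \/ 1 < beta').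
  by split; [apply: iff_trans fin_iff (iff_sym cond_iff) | exact: cond_iff].
split=> [fin|[b_gt1 alpha|b'_gt1]]; last 2 first.
- exact: p_finite_gt1.
- exact (p_finite_conj_gt1 q_irr qb qb' b'_gt1).
case: (ltrP 1 beta) => [|b_le1]; first by left.
case: (ltrP 1 beta') => [|b'_le1]; first by right.
have b_lt1 : beta < 1 by rewrite lt_neqAle b_neq1.
have b'_lt1 : beta' < 1 by rewrite lt_neqAle b'_neq1.
have [alpha] := not_p_finite_roots_lt1 A_gt0 qb qb' b_neq_b' b_lt1 b'_lt1.
by move/(_ (fin alpha)).
Qed.
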